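(* Let $M,N$ be positive integers and $C_0,\dots,C_{N-1}\in\{0,1,\dots,M-1\}$ arbitrary. For $p\in\{0,\dots,M-1\}$, $q\in\{0,\dots,N-1\}$ let $\bm\psi_{p,q}\in\mathbb{C}^N$ have entries $[\bm\psi_{p,q}]_n=\frac{1}{\sqrt N}e^{j\frac{2\pi p}{M}C_n+j\frac{2\pi q}{N}n}$, $n=0,\dots,N-1$, let $\bm\Psi_q=[\bm\psi_{0,q},\dots,\bm\psi_{M-1,q}]$ and $\bm\Psi=[\bm\Psi_0,\dots,\bm\Psi_{N-1}]\in\mathbb{C}^{N\times MN}$. Then the spectral norm of $\bm\Psi$ equals $\|\bm\Psi\|_s=\sqrt M$.
   Context: $j$ denotes the imaginary unit; $\|\cdot\|_s$ is the spectral norm (largest singular value). *)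

From HB Require Import structures.
From mathcomp Require Import all_boot all_order all_algebra.
From mathcomp Require Import all_classical all_reals all_analysis.
From mathcomp Require Import complex.
Set Implicit Arguments. Unset Strict Implicit. Unset Printing Implicit Defensive.
Import Order.TTheory GRing.Theory Num.Theory.
Local Open Scope ring_scope.
Local Open Scope complex_scope.

Definition cisR (R : realType) (x : R) : R[i] := (cos x) +i* (sin x).

Definition ctrmx (R : realType) m n (A : 'M[R[i]]_(m, n)) : 'M[R[i]]_(n, m) :=
  (map_mx (fun z : R[i] => z^*) A)^T.

(* Singular values of A : 'M_(m,n): the square roots of the eigenvalues of
   A A^H (which are real and nonnegative); the spectral norm is the largest. *)
Definition singular_values (R : realType) m n (A : 'M[R[i]]_(m, n)) : set R :=
  [set Num.sqrt (complex.Re l) | l in [set l | eigenvalue (A *m ctrmx A) l]].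

Definition spectral_norm (R : realType) m n (A : 'M[R[i]]_(m, n)) : R :=
  sup (singular_values A).

(* Psi = [Psi_0, ..., Psi_{N-1}], Psi_q = [psi_{0,q}, ..., psi_{M-1,q}];
   column k = q*M + p corresponds to psi_{p,q}, i.e. p = k %% M, q = k %/ M. *)
Definition Psi (R : realType) (M N : nat) (C : 'I_N -> 'I_M) : 'M[R[i]]_(N, M * N) :=
  \matrix_(n < N, k < M * N)
    let p := (k %% M)%N in let q := (k %/ M)%N in
    ((Num.sqrt (N%:R : R))^-1)%:C *
      cisR (2 * pi * p%:R / M%:R * (C n)%:R + 2 * pi * q%:R / N%:R * n%:R).

(* Psi Psi^H = M I: the (n, n') entry of the Gram matrix is a double sum over
   p < M and q < N that factors as (1/N) times two DFT orthogonality sums,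
   sum_p e^{2 pi j p (C_n - C_n') / M} * sum_q e^{2 pi j q (n - n') / N}
   = M [C_n = C_n'] * N [n = n'].  Hence every singular value is sqrt M. *)

From HB Require Import structures.
From mathcomp Require Import all_boot all_order all_algebra.
From mathcomp Require Import all_classical all_reals all_analysis.
From mathcomp Require Import complex.
From mathcomp Require Import ring lra zify.
Import Order.TTheory GRing.Theory Num.Theory.
Local Open Scope ring_scope.
Local Open Scope complex_scope.

Section ComplexExponential.
Variable R : realType.
Implicit Types x y : R.

Lemma cisRD x y : cisR (x + y) = cisR x * cisR y.
Proof.
rewrite /cisR cosD sinD; apply/eqP; rewrite eq_complex /=.
by apply/andP; split; apply/eqP; ring.
Qed.

Lemma cisR0 : cisR 0 = 1 :> R[i].
Proof. by rewrite /cisR cos0 sin0. Qed.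

Lemma cisRN x : cisR (- x) = (cisR x)^*.
Proof. by rewrite /cisR cosN sinN. Qed.

Lemma cisRMn x k : cisR (x *+ k) = cisR x ^+ k.
Proof. by elim: k => [|k IH]; rewrite ?cisR0 // mulrS exprS cisRD IH. Qed.

Lemma cisR_2pi : cisR (pi *+ 2) = 1 :> R[i].
Proof. by rewrite /cisR cos2pi sin2pi. Qed.

Lemma cisR_neq1 x : 0 < x < pi *+ 2 -> cisR x != 1.
Proof.
move=> /andP[x_gt0 x_lt2pi]; apply/negP => /eqP[cos1 sin0].
case: (ltgtP x pi) => [x_ltpi|pi_ltx|x_pi].
- by have := @sin_gt0_pi R x; rewrite x_gt0 x_ltpi sin0 ltxx => /(_ isT).
- have := @sin_gt0_pi R (x - pi).
  rewrite sinB sinpi cospi sin0 mul0r mulr0 subrr ltxx subr_gt0 pi_ltx.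
  by rewrite ltrBlDr -mulr2n x_lt2pi => /(_ isT).
- by move: cos1; rewrite x_pi cospi; lra.
Qed.

Lemma cisR_eq1 x : - (pi *+ 2) < x < pi *+ 2 -> cisR x = 1 -> x = 0.
Proof.
move=> /andP[lo hi] cis1; case: (ltgtP x 0) => // [x_lt0|x_gt0].
- have /negP[] : cisR (- x) != 1 by apply: cisR_neq1; rewrite oppr_gt0 x_lt0 ltrNl.
  by rewrite cisRN cis1 conjc1.
- have /negP[] : cisR x != 1 by apply: cisR_neq1; rewrite x_gt0 hi.
  by rewrite cis1.
Qed.

End ComplexExponential.

Lemma mul_real_conjc (R : rcfType) (s : R) (x y : R[i]) :
  s%:C * x * conjc (s%:C * y) = (s * s)%:C * (x * conjc y).
Proof.
case: x y => [a b] [c d]; apply/eqP; rewrite eq_complex /=.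
by apply/andP; split; apply/eqP; ring.
Qed.

Lemma mul_conjcM (R : rcfType) (x y u v : R[i]) :
  x * y * conjc (u * v) = x * conjc u * (y * conjc v).
Proof.
case: x y u v => [a b] [c d] [e f] [g h]; apply/eqP; rewrite eq_complex /=.
by apply/andP; split; apply/eqP; ring.
Qed.

Lemma sum_expr_unity_root_eq0 (F : idomainType) (w : F) N :
  w ^+ N = 1 -> w != 1 -> \sum_(i < N) w ^+ i = 0.
Proof.
move=> wN1 w_neq1; have /esym/eqP := subrX1 w N.
by rewrite wN1 subrr mulf_eq0 subr_eq0 (negbTE w_neq1) => /eqP.
Qed.

Lemma cisR_dft_root_neq1 (R : realType) N (n n' : 'I_N) : n != n' ->
  cisR (2 * pi * (n%:R - n'%:R) / N%:R : R) != 1.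
Proof.
move=> n_neq_n'; set x := (X in cisR X); apply/negP => /eqP /cisR_eq1 x_eq0.
have pi_gt0 := @pi_gt0 R.
have N_gt0 : (0 : R) < N%:R by rewrite ltr0n (leq_ltn_trans _ (ltn_ord n)).
have n_lt : (n%:R : R) < N%:R by rewrite ltr_nat.
have n'_lt : (n'%:R : R) < N%:R by rewrite ltr_nat.
have [n_ge0 n'_ge0] : (0 : R) <= n%:R /\ (0 : R) <= n'%:R by [].
have /x_eq0 : - (pi *+ 2) < x < pi *+ 2.
  by rewrite /x -mulr_natl ltr_pdivlMr // ltr_pdivrMr //; apply/andP; split; nra.
move=> /(congr1 ( *%R^~ N%:R)); rewrite /x divfK ?gt_eqF // mul0r => x0.
have /eqP : (n%:R : R) = n'%:R by nra.
by rewrite eqr_nat; apply/negP.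
Qed.

Lemma dft_orthogonality (R : realType) N (n n' : 'I_N) :
  \sum_(q < N) cisR (2 * pi * q%:R / N%:R * n%:R) *
               conjc (cisR (2 * pi * q%:R / N%:R * n'%:R) : R[i])
  = N%:R *+ (n == n').
Proof.
have N_gt0 : (0 : R) < N%:R by rewrite ltr0n (leq_ltn_trans _ (ltn_ord n)).
pose x : R := 2 * pi * (n%:R - n'%:R) / N%:R.
have termE (q : 'I_N) : cisR (2 * pi * q%:R / N%:R * n%:R) *
    conjc (cisR (2 * pi * q%:R / N%:R * n'%:R) : R[i]) = cisR x ^+ q.
  by rewrite -cisRN -cisRD -cisRMn -mulr_natl /x; congr cisR; field; lra.
under eq_bigr do rewrite termE.
case: (eqVneq n n') => [n_eq_n'|n_neq_n'].
  rewrite /x n_eq_n' subrr mulr0 mul0r cisR0.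
  by under eq_bigr do rewrite expr1n; rewrite sumr_const card_ord.
apply: sum_expr_unity_root_eq0; last exact: cisR_dft_root_neq1.
rewrite -cisRMn (_ : x *+ N = pi *+ 2 *+ n - pi *+ 2 *+ n'); last first.
  by rewrite /x; field; lra.
rewrite cisRD cisRN (cisRMn _ (pi *+ 2) n) (cisRMn _ (pi *+ 2) n') cisR_2pi.
by rewrite !expr1n conjc1 mulr1.
Qed.

Lemma sum_ord_mul_divmod (V : nmodType) M N (F : nat -> nat -> V) :
  \sum_(k < M * N) F (k %% M)%N (k %/ M)%N = \sum_(q < N) \sum_(p < M) F p q.
Proof.
rewrite -(big_mkord xpredT (fun k => F (k %% M)%N (k %/ M)%N)).
elim: N => [|N IH]; first by rewrite muln0 big_ord0 big_geq.
rewrite big_ord_recr /= -IH mulnS addnC (big_cat_nat _ (n := M * N)) //=; last by lia.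
congr (_ + _).
rewrite -{1}(add0n (M * N)%N) big_addn (addnC (M * N)%N) addnK big_mkord.
apply: eq_bigr => p _.
have p_lt_M := ltn_ord p; have M_gt0 := leq_ltn_trans (leq0n p) p_lt_M.
by rewrite addnC mulnC modnMDl modn_small // divnMDl // divn_small // addn0.
Qed.

Lemma eigenvalue_scalar_mx (F : fieldType) m (a l : F) : (0 < m)%N ->
  eigenvalue (a%:M : 'M[F]_m) l = (l == a).
Proof.
move=> m_gt0; apply/eigenvalueP/eqP => [[v] | ->].
  rewrite mul_mx_scalar => /eqP; rewrite -subr_eq0 -scalerBl scaler_eq0 subr_eq0.
  by move=> /orP[/eqP // | /eqP ->]; rewrite eqxx.
exists (const_mx 1); first by rewrite mul_mx_scalar.
apply/eqP => /matrixP /(_ 0 (Ordinal m_gt0)); rewrite !mxE => /eqP.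
by rewrite oner_eq0.
Qed.

Lemma spectral_norm_scalar_gram (R : realType) m n (A : 'M[R[i]]_(m, n)) (c : R) :
  (0 < m)%N -> A *m ctrmx A = c%:C%:M -> spectral_norm A = Num.sqrt c.
Proof.
move=> m_gt0 gramA; rewrite /spectral_norm /singular_values gramA.
suff -> : [set l | eigenvalue (c%:C%:M : 'M[R[i]]_m) l]%classic = [set c%:C]%classic.
  by rewrite image_set1 sup1.
by apply/seteqP; split => l /=; rewrite eigenvalue_scalar_mx // => /eqP.
Qed.

Lemma Psi_gram (R : realType) M N (C : 'I_N -> 'I_M) :
  Psi R C *m ctrmx (Psi R C) = (M%:R : R)%:C%:M.
Proof.
apply/matrixP => n n'; rewrite !mxE.
set s := (Num.sqrt (N%:R : R))^-1.
pose a (m : 'I_N) (p : nat) : R[i] := cisR (2 * pi * p%:R / M%:R * (C m)%:R).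
pose b (m : 'I_N) (q : nat) : R[i] := cisR (2 * pi * q%:R / N%:R * m%:R).
have entryE (k : 'I_(M * N)) : Psi R C n k * ctrmx (Psi R C) k n' =
    (s * s)%:C * (a n (k %% M)%N * conjc (a n' (k %% M)%N) *
                 (b n (k %/ M)%N * conjc (b n' (k %/ M)%N))).
  by rewrite !mxE; cbv zeta; rewrite !cisRD mul_real_conjc mul_conjcM.
under eq_bigr do rewrite entryE.
rewrite -mulr_sumr (sum_ord_mul_divmod _ M N
  (fun p q => a n p * conjc (a n' p) * (b n q * conjc (b n' q)))).
under eq_bigr do rewrite -mulr_suml.
rewrite -mulr_sumr /a /b !dft_orthogonality.
case: (eqVneq n n') => [<-|_]; last by rewrite /= !mulr0n !mulr0.
have N_gt0 : (0 : R) < N%:R by rewrite ltr0n (leq_ltn_trans _ (ltn_ord n)).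
have ss : s * s = N%:R^-1 by rewrite -invfM -expr2 sqr_sqrtr ?ler0n.
rewrite eqxx !mulr1n -!(rmorph_nat (real_complex R)) -!rmorphM ss.
by congr (_%:C); field; lra.
Qed.

Theorem corollary1 (R : realType) (M N : nat) (hM : (0 < M)%N) (hN : (0 < N)%N)
  (C : 'I_N -> 'I_M) :
  spectral_norm (Psi R C) = Num.sqrt (M%:R : R).
Proof.
by apply: spectral_norm_scalar_gram hN _; apply: Psi_gram.
Qed.
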